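(* For every extended directed co-graph $G=(V,E)$ which is given by a binary ex-di-co-tree, the directed path-width $\mathrm{dpw}(G)$ and the directed tree-width $\mathrm{dtw}(G)$ can be computed in time $O(|V|)$.
   Context: Digraphs are finite, without loops or multiple arcs. For vertex-disjoint digraphs $G_1,\ldots,G_k$: the series composition $\otimes$ is their disjoint union plus all arcs in both directions between vertices of different $G_i$; a directed union $\ominus$ is any digraph obtained from their disjoint union by adding some (possibly none or all) arcs from vertices of $G_i$ to vertices of $G_j$ with $i<j$. Extended directed co-graphs: single-vertex digraphs, and closure under directed union and series composition. An ex-di-co-tree for $G$ is a rooted tree whose leaves correspond to the vertices of $G$ and whose inner nodes correspond to directed union or series composition operations applied to the digraphs defined by the child subtrees (in order), so that the root yields $G$; it is binary if every inner node has exactly two children. Directed path-width: a directed path-decomposition of $G=(V,E)$ is a sequence $(X_1,\ldots,X_r)$ of subsets of $V$ with $\bigcup X_i=V$, for each arc $(u,v)$ some $i\le j$ with $u\in X_i,v\in X_j$, and for each vertex the bags containing it having consecutive indices; width $\max|X_i|-1$; $\mathrm{dpw}(G)$ is the minimum width. Directed tree-width: for $Z\subseteq V$, $S\subseteq V$ is $Z$-normal if no directed walk in $G-Z$ with first and last vertex in $S$ uses a vertex of $G-(Z\cup S)$. A directed tree-decomposition is $(T,\mathcal{X},\mathcal{W})$ with $T=(V_T,E_T)$ an out-tree (rooted, arcs directed away from root; $u\le v$ means a directed path of $\ge0$ arcs from $u$ to $v$), $\mathcal{X}=\{X_e:e\in E_T\}$, $\mathcal{W}=\{W_r:r\in V_T\}$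 subsets of $V$, such that $\mathcal{W}$ partitions $V$ into nonempty sets and for each $(u,v)\in E_T$ the set $\bigcup\{W_r: v\le r\}$ is $X_{(u,v)}$-normal; width $\max_r|W_r\cup\bigcup_{e\sim r}X_e|-1$ ($e\sim r$: $r$ is an end of $e$); $\mathrm{dtw}(G)$ is the minimum width. *)

From mathcomp Require Import all_boot.
Set Implicit Arguments. Unset Strict Implicit. Unset Printing Implicit Defensive.

(* Binary ex-di-co-trees: leaves labelled by vertices, inner nodes are
   binary directed unions or binary series compositions (children ordered). *)
Inductive cotree (V : Type) : Type :=
| CLeaf of V
| CUnion of cotree V & cotree V
| CSeries of cotree V & cotree V.
Arguments CLeaf {V}. Arguments CUnion {V}. Arguments CSeries {V}.

Fixpoint leaves (V : Type) (t : cotree V) : seq V :=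
  match t with
  | CLeaf v => [:: v]
  | CUnion l r => leaves l ++ leaves r
  | CSeries l r => leaves l ++ leaves r
  end.

(* [yields E t]: the digraph E induced on the leaves of t is the one obtained
   by evaluating t: a leaf is a single vertex (no loop); a directed union
   G1 (-) G2 keeps G1, G2 and allows arbitrary arcs from G1 to G2 but none
   from G2 to G1; a series composition adds all arcs in both directions. *)
Fixpoint yields (V : eqType) (E : rel V) (t : cotree V) : bool :=
  match t with
  | CLeaf v => ~~ E v v
  | CUnion l r =>
      [&& yields E l, yields E r &
          all (fun u => all (fun v => ~~ E v u) (leaves r)) (leaves l)]
  | CSeries l r =>
      [&& yields E l, yields E r &
          all (fun u => all (fun v => E u v && E v u) (leaves r)) (leaves l)]
  end.

Definition is_bin_exdicotree (V : finType) (E : rel V) (t : cotree V) : Prop :=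
  [/\ uniq (leaves t), (forall v : V, v \in leaves t) & yields E t].

Definition is_dpath_dec (V : finType) (E : rel V) (s : seq {set V}) : Prop :=
  [/\ (forall v : V, exists2 i, i < size s & v \in nth set0 s i),
      (forall u v : V, E u v -> exists i j, [/\ i <= j, j < size s,
                                   u \in nth set0 s i & v \in nth set0 s j]) &
      (forall (v : V) i j k, i <= j -> j <= k -> k < size s ->
          v \in nth set0 s i -> v \in nth set0 s k -> v \in nth set0 s j)].

Definition dpd_width (V : finType) (s : seq {set V}) : nat :=
  (\max_(X <- s) #|X|) - 1.

Definition is_dpw (V : finType) (E : rel V) (k : nat) : Prop :=
  (exists s, is_dpath_dec E s /\ dpd_width s = k) /\
  (forall s, is_dpath_dec E s -> k <= dpd_width s).

Definition Z_normal (V : finType) (E : rel V) (Z : {set V}) (S : V -> Prop)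
  : Prop :=
  forall (x : V) (p : seq V),
    path E x p -> all (fun y => y \notin Z) (x :: p) ->
    S x -> S (last x p) ->
    forall y, y \in x :: p -> y \in Z \/ S y.

(* Out-trees on a finite node type R, given by a parent map; arcs are
   (u, v) with par v = Some u, directed away from the root. *)
Definition iter_par (R : Type) (par : R -> option R) (n : nat) (v : R)
  : option R := iter n (fun o => obind par o) (Some v).

Definition out_tree (R : finType) (par : R -> option R) (root : R) : Prop :=
  par root = None /\ forall v : R, exists n, iter_par par n v = Some root.

Definition tle (R : Type) (par : R -> option R) (u v : R) : Prop :=
  exists n, iter_par par n v = Some u.

(* Directed tree-decomposition (T, X, W): the arc (u, v) of T is indexed by
   its head v (which has parent u), so X_(u,v) = X v. *)
Definition is_dtree_dec (V : finType) (E : rel V) (R : finType)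
  (par : R -> option R) (root : R) (X W : R -> {set V}) : Prop :=
  [/\ out_tree par root,
      (forall r, W r != set0),
      (forall r1 r2, r1 != r2 -> [disjoint W r1 & W r2]),
      (forall x : V, exists r, x \in W r) &
      (forall u v, par v = Some u ->
         Z_normal E (X v) (fun x => exists2 r, tle par v r & x \in W r))].

Definition dtd_bag (V R : finType) (par : R -> option R) (X W : R -> {set V})
  (r : R) : {set V} :=
  W r :|: (if par r is Some _ then X r else set0)
      :|: \bigcup_(c | par c == Some r) X c.

Definition dtd_width (V R : finType) (par : R -> option R)
  (X W : R -> {set V}) : nat :=
  (\max_(r : R) #|dtd_bag par X W r|) - 1.

Definition is_dtw (V : finType) (E : rel V) (k : nat) : Prop :=
  (exists (R : finType) (par : R -> option R) (root : R) (X W : R -> {set V}),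
      is_dtree_dec E par root X W /\ dtd_width par X W = k) /\
  (forall (R : finType) (par : R -> option R) (root : R) (X W : R -> {set V}),
      is_dtree_dec E par root X W -> k <= dtd_width par X W).

(* Cost model: bottom-up tree programs (unit-cost arithmetic).         *)
(* A program keeps a state of pk natural numbers per tree node.  A leaf *)
(* gets constant state; an inner node's state is computed from its two *)
(* children's states by fixed arithmetic expressions; the answers are *)
(* read off the root state by fixed expressions.  Each evaluated       *)
(* expression node costs one step.                                    *)

Inductive aexp (n : nat) : Type :=
| AVar of 'I_n
| AConst of nat
| AAdd of aexp n & aexp n
| ASub of aexp n & aexp n
| AMul of aexp n & aexp n
| AMin of aexp n & aexp n
| AMax of aexp n & aexp n.

Fixpoint aeval (n : nat) (env : 'I_n -> nat) (e : aexp n) : nat :=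
  match e with
  | AVar i => env i
  | AConst c => c
  | AAdd a b => aeval env a + aeval env b
  | ASub a b => aeval env a - aeval env b
  | AMul a b => aeval env a * aeval env b
  | AMin a b => minn (aeval env a) (aeval env b)
  | AMax a b => maxn (aeval env a) (aeval env b)
  end.

Fixpoint asize (n : nat) (e : aexp n) : nat :=
  match e with
  | AVar _ | AConst _ => 1
  | AAdd a b | ASub a b | AMul a b | AMin a b | AMax a b =>
      (asize a + asize b).+1
  end.

Record tprog := TProg {
  pk : nat;
  pleaf : 'I_pk -> nat;
  punion : 'I_pk -> aexp (pk + pk);
  pseries : 'I_pk -> aexp (pk + pk);
  pout_pw : aexp pk;
  pout_tw : aexp pk }.
Arguments pleaf : clear implicits. Arguments punion : clear implicits.
Arguments pseries : clear implicits. Arguments pout_pw : clear implicits.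
Arguments pout_tw : clear implicits.

Definition pair_env (k : nat) (f g : 'I_k -> nat) : 'I_(k + k) -> nat :=
  fun i => match split i with inl a => f a | inr b => g b end.

Fixpoint run_state (P : tprog) (V : Type) (t : cotree V) : 'I_(pk P) -> nat :=
  match t with
  | CLeaf _ => pleaf P
  | CUnion l r => fun i =>
      aeval (pair_env (@run_state P V l) (@run_state P V r)) (punion P i)
  | CSeries l r => fun i =>
      aeval (pair_env (@run_state P V l) (@run_state P V r)) (pseries P i)
  end.
Arguments run_state P {V} t.

Fixpoint state_cost (P : tprog) (V : Type) (t : cotree V) : nat :=
  match t with
  | CLeaf _ => pk P
  | CUnion l r => @state_cost P V l + @state_cost P V r +
                  \sum_(i < pk P) asize (punion P i)
  | CSeries l r => @state_cost P V l + @state_cost P V r +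
                   \sum_(i < pk P) asize (pseries P i)
  end.
Arguments state_cost P {V} t.

Definition run_pw (P : tprog) (V : Type) (t : cotree V) : nat :=
  aeval (run_state P t) (pout_pw P).
Definition run_tw (P : tprog) (V : Type) (t : cotree V) : nat :=
  aeval (run_state P t) (pout_tw P).
Definition run_cost (P : tprog) (V : Type) (t : cotree V) : nat :=
  state_cost P t + asize (pout_pw P) + asize (pout_tw P).

(* Write w for the function [cowidth] on binary ex-di-co-trees: w(leaf) = 0,
   w(l (-) r) = max(w l, w r) and w(l (x) r) = min(w l + |r|, w r + |l|).  Both
   dpw and dtw equal w.  For the upper bound, a directed path-decomposition of
   width w is built bottom-up: concatenate the decompositions of the two sides
   of a directed union, and for a series composition add all vertices of one
   side to every bag of the other.  Ordering the vertices by their first bag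
   turns it into a directed tree-decomposition, whose tree is a path, of no
   larger width.  For the lower bound, the tree carries a haven of order
   w + 1 (a monotone choice of a strongly connected vertex set avoiding each
   small separator), and a haven of order k + 1 forces a bag of more than k
   vertices in every directed path- or tree-decomposition.  Finally w and the
   number of leaves are computed bottom-up with constant work per node. *)

From mathcomp Require Import all_boot zify.
Set Implicit Arguments. Unset Strict Implicit. Unset Printing Implicit Defensive.

Definition nleaves (V : Type) (t : cotree V) : nat := size (leaves t).

Fixpoint cowidth (V : Type) (t : cotree V) : nat :=
  match t with
  | CLeaf _ => 0
  | CUnion l r => maxn (cowidth l) (cowidth r)
  | CSeries l r => minn (cowidth l + nleaves r) (cowidth r + nleaves l)
  end.

Fixpoint first_leaf (V : Type) (t : cotree V) : V :=
  match t with CLeaf v => v | CUnion l _ | CSeries l _ => first_leaf l end.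

Definition leafset (V : finType) (t : cotree V) : {set V} := [set x in leaves t].

Lemma leafset_cat (V : finType) (l r : cotree V) :
  [set x in leaves l ++ leaves r] = leafset l :|: leafset r.
Proof. by apply/setP => x; rewrite !inE mem_cat. Qed.

Lemma disjoint_leafset (V : finType) (l r : cotree V) :
  uniq (leaves l ++ leaves r) -> [disjoint leafset l & leafset r].
Proof.
rewrite cat_uniq => /and3P[_ /hasPn lr _]; apply/pred0P => x /=.
by rewrite !inE; apply/negbTE/nandP; case: (boolP (x \in leaves r)); auto.
Qed.

Lemma card_leafset (V : finType) (t : cotree V) : #|leafset t| <= nleaves t.
Proof. by rewrite cardsE card_size. Qed.

Section PathDecompositionOn.
Variables (V : finType) (E : rel V).

Definition bags_convex (s : seq {set V}) : Prop :=
  forall v i j k, i <= j -> j <= k -> k < size s ->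
    v \in nth set0 s i -> v \in nth set0 s k -> v \in nth set0 s j.

Definition is_dpath_dec_on (A : {set V}) (s : seq {set V}) : Prop :=
  [/\ 0 < size s, (forall i, nth set0 s i \subset A),
      {in A, forall v, exists2 i, i < size s & v \in nth set0 s i},
      {in A &, forall u v, E u v -> exists i j,
         [/\ i <= j, j < size s, u \in nth set0 s i & v \in nth set0 s j]} &
      bags_convex s].

Lemma is_dpath_dec_onT (s : seq {set V}) :
  is_dpath_dec_on [set: V] s -> is_dpath_dec E s.
Proof.
by case=> _ _ cov arc conv; split=> [v|u v|//]; [apply: cov | apply: arc].
Qed.

Lemma is_dpath_dec_on1 (v : V) : is_dpath_dec_on [set v] [:: [set v]].
Proof.
split=> //.
- by case=> [|i] /=; rewrite ?nth_nil ?sub0set.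
- by move=> x xv; exists 0.
- by move=> x y xv yv _; exists 0, 0.
- by move=> x [|i] [|j] [|k].
Qed.

Lemma is_dpath_dec_on_series (A B : {set V}) (s : seq {set V}) :
  is_dpath_dec_on A s -> is_dpath_dec_on (A :|: B) [seq X :|: B | X <- s].
Proof.
case=> s0 sub cov arc conv.
have nthU i : i < size s -> nth set0 [seq X :|: B | X <- s] i = nth set0 s i :|: B.
  by move=> lt_i; rewrite (nth_map set0).
have covU : {in A :|: B, forall v, exists2 i, i < size s &
                                     v \in nth set0 s i :|: B}.
  move=> v; rewrite inE => /orP[/cov[i lt_i vi] | vB].
    by exists i; rewrite // inE vi.
  by exists 0; rewrite // inE vB orbT.
split; rewrite ?size_map //.
- move=> i; case: (ltnP i (size s)) => [lt_i | ge_i].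
    by rewrite nthU // setUSS.
  by rewrite nth_default ?size_map ?sub0set.
- by move=> v /covU[i lt_i vi]; exists i; rewrite ?nthU.
- move=> u v uA vA uv; case/boolP: (u \in B) => uB.
    have [j lt_j vj] := covU v vA.
    by exists j, j; rewrite !nthU //; split; rewrite // inE uB orbT.
  case/boolP: (v \in B) => vB.
    have [i lt_i ui] := covU u uA.
    by exists i, i; rewrite !nthU //; split; rewrite // inE vB orbT.
  move: uA vA; rewrite !inE (negbTE uB) (negbTE vB) !orbF => uA vA.
  have [i [j [le_ij lt_j ui vj]]] := arc u v uA vA uv.
  by exists i, j; rewrite !nthU ?inE ?ui ?vj //; apply: leq_ltn_trans lt_j.
- move=> v i j k le_ij le_jk; rewrite size_map => lt_k.
  have lt_j := leq_ltn_trans le_jk lt_k; have lt_i := leq_ltn_trans le_ij lt_j.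
  rewrite !nthU // !inE; case: (v \in B); rewrite ?orbT ?orbF //.
  exact: conv.
Qed.

Lemma bags_convex_cat (A1 A2 : {set V}) (s1 s2 : seq {set V}) :
  [disjoint A1 & A2] ->
  (forall i, nth set0 s1 i \subset A1) -> (forall i, nth set0 s2 i \subset A2) ->
  bags_convex s1 -> bags_convex s2 -> bags_convex (s1 ++ s2).
Proof.
move=> dis sub1 sub2 conv1 conv2 v i j k le_ij le_jk; rewrite size_cat => lt_k.
rewrite !nth_cat; case: (ltnP k (size s1)) => [lt_k1 | ge_k1].
  have lt_j := leq_ltn_trans le_jk lt_k1; have lt_i := leq_ltn_trans le_ij lt_j.
  by rewrite lt_j lt_i; apply: conv1.
case: (ltnP i (size s1)) => [_ vi vk | ge_i1].
  by have := disjointFr dis (subsetP (sub1 i) v vi); rewrite (subsetP (sub2 _) v vk).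
have ge_j1 := leq_trans ge_i1 le_ij; rewrite [j < _]ltnNge ge_j1 /=.
by apply: conv2; rewrite ?leq_sub2r // ltn_subLR // addnC.
Qed.

Lemma is_dpath_dec_on_cat (A1 A2 : {set V}) (s1 s2 : seq {set V}) :
  [disjoint A1 & A2] -> {in A2 & A1, forall u v, ~~ E u v} ->
  is_dpath_dec_on A1 s1 -> is_dpath_dec_on A2 s2 ->
  is_dpath_dec_on (A1 :|: A2) (s1 ++ s2).
Proof.
move=> dis no_back [s10 sub1 cov1 arc1 conv1] [s20 sub2 cov2 arc2 conv2].
have nth1 i : i < size s1 -> nth set0 (s1 ++ s2) i = nth set0 s1 i.
  by move=> lt_i; rewrite nth_cat lt_i.
have nth2 i : nth set0 (s1 ++ s2) (size s1 + i) = nth set0 s2 i.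
  by rewrite nth_cat ltnNge leq_addr addKn.
have cov1' : {in A1, forall v, exists2 i, i < size s1 & v \in nth set0 (s1 ++ s2) i}.
  by move=> v /cov1[i lt_i vi]; exists i; rewrite ?nth1.
have cov2' : {in A2, forall v, exists2 i, i < size s2 &
                                  v \in nth set0 (s1 ++ s2) (size s1 + i)}.
  by move=> v /cov2[i lt_i vi]; exists i; rewrite ?nth2.
split; rewrite ?size_cat.
- by rewrite addn_gt0 s10.
- move=> i; rewrite nth_cat; case: ifP => _.
    exact: subset_trans (sub1 i) (subsetUl _ _).
  exact: subset_trans (sub2 _) (subsetUr _ _).
- move=> v; rewrite inE => /orP[/cov1'[i lt_i vi] | /cov2'[i lt_i vi]].
    by exists i; rewrite ?ltn_addr.
  by exists (size s1 + i); rewrite ?ltn_add2l.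
- move=> u v; rewrite !inE => /orP[uA | uA] /orP[vA | vA] uv.
  + have [i [j [le_ij lt_j ui vj]]] := arc1 u v uA vA uv.
    have lt_i := leq_ltn_trans le_ij lt_j.
    by exists i, j; rewrite !nth1 ?ltn_addr.
  + have [i lt_i ui] := cov1' u uA; have [j lt_j vj] := cov2' v vA.
    by exists i, (size s1 + j); rewrite ?ltn_add2l // ltnW ?ltn_addr.
  + by have := no_back u v uA vA; rewrite uv.
  + have [i [j [le_ij lt_j ui vj]]] := arc2 u v uA vA uv.
    by exists (size s1 + i), (size s1 + j); rewrite !nth2 leq_add2l ltn_add2l.
- exact: bags_convex_cat dis sub1 sub2 conv1 conv2.
Qed.

End PathDecompositionOn.

Fixpoint cotree_dpd (V : finType) (t : cotree V) : seq {set V} :=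
  match t with
  | CLeaf v => [:: [set v]]
  | CUnion l r => cotree_dpd l ++ cotree_dpd r
  | CSeries l r =>
      if cowidth l + nleaves r <= cowidth r + nleaves l
      then [seq X :|: leafset r | X <- cotree_dpd l]
      else [seq X :|: leafset l | X <- cotree_dpd r]
  end.

Lemma cotree_dpd_bags (V : finType) (t : cotree V) :
  all (fun X : {set V} => #|X| <= (cowidth t).+1) (cotree_dpd t).
Proof.
have bagsU (s : seq {set V}) (B : {set V}) m n :
    #|B| <= n -> all (fun X : {set V} => #|X| <= m) s ->
    all (fun X : {set V} => #|X| <= m + n) [seq X :|: B | X <- s].
  move=> le_B /allP le_s; rewrite all_map; apply/allP => X /le_s le_X /=.
  exact: leq_trans (leq_card_setU _ _) (leq_add le_X le_B).
elim: t => [v|l IHl r IHr|l IHl r IHr] /=; first by rewrite cards1.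
  rewrite all_cat; apply/andP; split.
    by apply: sub_all IHl => X /leq_trans; apply; rewrite ltnS leq_maxl.
  by apply: sub_all IHr => X /leq_trans; apply; rewrite ltnS leq_maxr.
case: leqP => [le_lr | lt_rl].
  by apply: sub_all (bagsU _ _ _ _ (card_leafset r) IHl) => X /leq_trans; apply; lia.
by apply: sub_all (bagsU _ _ _ _ (card_leafset l) IHr) => X /leq_trans; apply; lia.
Qed.

Lemma cotree_dpd_dec (V : finType) (E : rel V) (t : cotree V) :
  uniq (leaves t) -> yields E t -> is_dpath_dec_on E (leafset t) (cotree_dpd t).
Proof.
elim: t => [v|l IHl r IHr|l IHl r IHr] /= u_t.
- move=> _; have -> : leafset (CLeaf v) = [set v] by apply/setP => x; rewrite !inE.
  exact: is_dpath_dec_on1.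
- move: (u_t); rewrite cat_uniq => /and3P[u_l _ u_r] /and3P[y_l y_r no_back].
  rewrite /leafset leafset_cat; apply: is_dpath_dec_on_cat (IHl u_l y_l) (IHr u_r y_r).
    exact: disjoint_leafset.
  move=> x y; rewrite !inE => xr yl.
  by move/allP: no_back => /(_ y yl) /allP /(_ x xr).
- move: (u_t); rewrite cat_uniq => /and3P[u_l _ u_r] /and3P[y_l y_r _].
  rewrite /leafset leafset_cat; case: ifP => _.
    exact: is_dpath_dec_on_series (IHl u_l y_l).
  by rewrite setUC; apply: is_dpath_dec_on_series (IHr u_r y_r).
Qed.

Lemma path_avoiding_closed (V : finType) (E : rel V) (Z : {set V}) (P : V -> Prop)
    x p :
  (forall a c, E a c -> P a -> c \notin Z -> P c) ->
  path E x p -> all (fun y => y \notin Z) (x :: p) -> P x ->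
  forall y, y \in x :: p -> P y.
Proof.
move=> closed; elim: p x => [|z p IHp] x /=.
  by move=> _ _ Px y; rewrite inE => /eqP->.
move=> /andP[xz pz] /and3P[_ zZ pZ] Px y; rewrite inE => /predU1P[-> // | yp].
by apply: IHp yp; rewrite //= ?zZ //; apply: closed xz Px zZ.
Qed.

Definition below (V R : finType) (par : R -> option R) (W : R -> {set V}) (v : R)
  (x : V) : Prop := exists2 r, tle par v r & x \in W r.

Section SeqOutTree.
Variables (R : finType) (x0 : R) (L : seq R).
Hypotheses (L_uniq : uniq L) (L_total : forall v, v \in L).

Definition seq_par (v : R) : option R :=
  if index v L is j.+1 then Some (nth x0 L j) else None.

Let index_nth j : j < size L -> index (nth x0 L j) L = j.
Proof. by move=> lt_j; rewrite index_uniq. Qed.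

Lemma iter_seq_par n v :
  iter_par seq_par n v =
  if n <= index v L then Some (nth x0 L (index v L - n)) else None.
Proof.
have lt_v : index v L < size L by rewrite index_mem.
elim: n => [|n IHn]; first by rewrite /= subn0 nth_index.
rewrite /iter_par iterS -/(iter_par _ _ _) IHn.
case: (leqP n (index v L)) => [le_n | lt_n] /=; last by rewrite ltnNge ltnW.
rewrite /seq_par index_nth ?(leq_ltn_trans (leq_subr _ _) lt_v) //.
case: (ltnP n (index v L)) => [lt_n | ge_n].
  by rewrite (_ : index v L - n = (index v L - n.+1).+1) //; lia.
by rewrite (_ : index v L - n = 0) //; lia.
Qed.

Lemma seq_out_tree : out_tree seq_par (nth x0 L 0).
Proof.
have lt0 : 0 < size L by case: L L_total => // /(_ x0).
split=> [|v]; first by rewrite /seq_par index_nth.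
by exists (index v L); rewrite iter_seq_par leqnn subnn.
Qed.

Lemma tle_seq_par u v : tle seq_par u v <-> index u L <= index v L.
Proof.
have lt_v : index v L < size L by rewrite index_mem.
split=> [[n] | le_uv].
  rewrite iter_seq_par; case: ifP => // _ [<-].
  by rewrite index_nth ?leq_subr // (leq_ltn_trans (leq_subr _ _) lt_v).
by exists (index v L - index u L); rewrite iter_seq_par leq_subr subKn // nth_index.
Qed.

Lemma seq_par_index c r : seq_par c = Some r -> index c L = (index r L).+1.
Proof.
rewrite /seq_par; have := index_mem c L; rewrite L_total.
by case: (index c L) => [|j] //= lt_j [<-]; rewrite index_nth // ltnW.
Qed.


End SeqOutTree.

Section PathToTreeDecomposition.
Variables (V : finType) (E : rel V) (x0 : V) (s : seq {set V}).
Hypothesis s_dec : is_dpath_dec E s.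

Definition first_bag (v : V) : nat := find (fun X : {set V} => v \in X) s.

Lemma first_bag_lt v : first_bag v < size s.
Proof.
case: s_dec => cov _ _; have [i lt_i vi] := cov v.
by rewrite -has_find; apply/hasP; exists (nth set0 s i); rewrite ?mem_nth.
Qed.

Lemma mem_first_bag v : v \in nth set0 s (first_bag v).
Proof.
by apply: (@nth_find _ set0 (fun X : {set V} => v \in X)); rewrite has_find first_bag_lt.
Qed.

Lemma first_bag_min v i : v \in nth set0 s i -> first_bag v <= i.
Proof. by move=> vi; rewrite leqNgt; apply: contraL vi => /(before_find set0) ->. Qed.

Definition bag_order : seq V := sort (relpre first_bag leq) (enum V).

Let order_uniq : uniq bag_order. Proof. by rewrite sort_uniq enum_uniq. Qed.
Let order_total v : v \in bag_order. Proof. by rewrite mem_sort mem_enum. Qed.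

Definition bag_pos (v : V) : nat := index v bag_order.

Lemma first_bag_mono a b : bag_pos a <= bag_pos b -> first_bag a <= first_bag b.
Proof.
have sorted_order : sorted (relpre first_bag leq) bag_order.
  by apply: sort_sorted => u v; apply: leq_total.
move=> le_ab; rewrite -(nth_index x0 (order_total a)) -(nth_index x0 (order_total b)).
apply: (sorted_leq_nth (relpre_trans leq_trans) (fun u => leqnn _) x0 sorted_order);
  by rewrite // inE index_mem.
Qed.

Definition chain_par : V -> option V := seq_par x0 bag_order.
Definition chain_X (v : V) : {set V} :=
  nth set0 s (first_bag v) :&: [set u | bag_pos u < bag_pos v].
Definition chain_W (v : V) : {set V} := [set v].

Lemma below_chain v x : below chain_par chain_W v x <-> bag_pos v <= bag_pos x.
Proof.
have tleP := tle_seq_par x0 order_uniq order_total.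
split=> [[r /tleP le_vr] | le_vx]; first by rewrite inE => /eqP->.
by exists x; rewrite ?inE //; apply/tleP.
Qed.

Lemma chain_normal v : Z_normal E (chain_X v) (below chain_par chain_W v).
Proof.
case: s_dec => _ arc conv x p xp pZ /below_chain xv _ y yp; right; apply/below_chain.
apply: (path_avoiding_closed (P := fun a => bag_pos v <= bag_pos a) _ xp pZ xv yp).
move=> a c ac va; apply: contraNT.
rewrite -ltnNge => lt_cv; have [i [j [le_ij lt_j ai cj]]] := arc a c ac.
have le_cv := first_bag_mono (ltnW lt_cv).
have le_va := leq_trans (first_bag_mono va) (first_bag_min ai).
rewrite !inE lt_cv andbT.
exact: conv le_cv (leq_trans le_va le_ij) lt_j (mem_first_bag c) cj.
Qed.

Lemma chain_bag_sub v :
  dtd_bag chain_par chain_X chain_W v \subset nth set0 s (first_bag v).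
Proof.
case: s_dec => _ _ conv.
rewrite /dtd_bag !subUset sub1set mem_first_bag /=; apply/andP; split.
  by case: (chain_par v) => [_|]; rewrite ?subsetIl ?sub0set.
apply/bigcupsP => c /eqP /(seq_par_index order_uniq order_total) pos_c.
apply/subsetP => y; rewrite !inE => /andP[yc lt_yc].
apply: conv (first_bag_lt c) (mem_first_bag y) yc; apply: first_bag_mono.
  by rewrite /bag_pos -ltnS -pos_c.
by rewrite /bag_pos pos_c.
Qed.

Lemma chain_is_dtree_dec : is_dtree_dec E chain_par (nth x0 bag_order 0) chain_X chain_W.
Proof.
split=> [|r|r1 r2|x|u v _]; first exact: seq_out_tree.
- by apply/set0Pn; exists r; rewrite inE.
- by rewrite disjoints1 inE eq_sym.
- by exists x; rewrite inE.
- exact: chain_normal.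
Qed.

Lemma chain_width : dtd_width chain_par chain_X chain_W <= dpd_width s.
Proof.
rewrite leq_sub2r //; apply/bigmax_leqP => v _.
apply: leq_trans (subset_leq_card (chain_bag_sub v)) _.
by apply: (leq_bigmax_seq (F := fun X : {set V} => #|X|)); rewrite ?mem_nth ?first_bag_lt.
Qed.

End PathToTreeDecomposition.

Lemma dtree_dec_of_dpath_dec (V : finType) (E : rel V) (x0 : V) (s : seq {set V}) :
  is_dpath_dec E s ->
  exists (par : V -> option V) (root : V) (X W : V -> {set V}),
    is_dtree_dec E par root X W /\ dtd_width par X W <= dpd_width s.
Proof.
move=> s_dec; exists (chain_par x0 s), (nth x0 (bag_order s) 0), (chain_X s), (@chain_W V).
split; [exact: chain_is_dtree_dec s_dec | exact: chain_width s_dec].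
Qed.

Section Havens.
Variables (V : finType) (E : rel V).

Definition walk_avoiding (Z : {set V}) (x y : V) : Prop :=
  exists p, [/\ path E x p, last x p = y & all (fun z => z \notin Z) (x :: p)].

(* A relaxation of the havens of Johnson, Robertson, Seymour and Thomas:
   [b Z] is a strongly connected vertex set of [G - Z] inside [A], and only
   the vertices of [Z] in [A] count towards the order. *)
Definition haven (A : {set V}) (k : nat) (b : {set V} -> {set V}) : Prop :=
  forall Z : {set V}, #|Z :&: A| < k ->
  [/\ b Z != set0, b Z \subset A :\: Z,
      {in b Z &, forall x y, walk_avoiding Z x y} &
      forall Z' : {set V}, Z \subset Z' -> #|Z' :&: A| < k -> b Z' \subset b Z].

Lemma haven_order_le (A : {set V}) k b : haven A k b -> k <= #|A|.
Proof.
move=> hb; rewrite leqNgt; apply/negP => lt_A.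
have := hb A; rewrite setIid => /(_ lt_A)[/set0Pn[x xb] sub _ _].
by have := subsetP sub x xb; rewrite setDv inE.
Qed.

Lemma haven_sub (A A' : {set V}) k k' b :
  A \subset A' -> k' <= k -> haven A k b -> haven A' k' b.
Proof.
move=> sAA' le_k hb.
have small Z : #|Z :&: A'| < k' -> #|Z :&: A| < k.
  move=> lt_Z; apply: leq_ltn_trans (leq_trans lt_Z le_k).
  exact/subset_leq_card/setIS.
move=> Z /[dup] lt_Z /small/hb[ne sub walk mono]; split=> //.
  exact: subset_trans sub (setSD _ sAA').
by move=> Z' sZZ' /small; apply: mono.
Qed.

Lemma haven1 (v : V) : haven [set v] 1 (fun _ => [set v]).
Proof.
move=> Z; rewrite ltnS leqn0 cards_eq0 => /eqP Zv.
have vZ : v \notin Z by apply/negP => vZ; move/setP/(_ v): Zv; rewrite !inE vZ eqxx.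
split=> //.
- by apply/set0Pn; exists v; rewrite inE.
- by rewrite sub1set !inE eqxx vZ.
- by move=> x y /set1P-> /set1P->; exists [::]; rewrite /= vZ.
Qed.

Lemma series_walk_avoiding (A1 A2 Z : {set V}) a1 a2 :
  {in A1 & A2, forall u v, E u v && E v u} ->
  a1 \in A1 :\: Z -> a2 \in A2 :\: Z ->
  {in (A1 :|: A2) :\: Z &, forall x y, walk_avoiding Z x y}.
Proof.
move=> arc; rewrite !inE => /andP[a1Z a1A] /andP[a2Z a2A] x y.
rewrite !inE => /andP[xZ xA] /andP[yZ yA].
case/orP: xA => xA; case/orP: yA => yA.
- have /andP[xa2 _] := arc x a2 xA a2A; have /andP[_ a2y] := arc y a2 yA a2A.
  by exists [:: a2; y]; rewrite /= xa2 a2y xZ a2Z yZ.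
- by have /andP[xy _] := arc x y xA yA; exists [:: y]; rewrite /= xy xZ yZ.
- by have /andP[_ xy] := arc y x yA xA; exists [:: y]; rewrite /= xy xZ yZ.
- have /andP[_ xa1] := arc a1 x a1A xA; have /andP[a1y _] := arc a1 y a1A yA.
  by exists [:: a1; y]; rewrite /= xa1 a1y xZ a1Z yZ.
Qed.

Section SeriesHaven.
Variables (A1 A2 : {set V}) (k1 k2 : nat) (b1 b2 : {set V} -> {set V}).
Hypotheses (dis : [disjoint A1 & A2]) (arc : {in A1 & A2, forall u v, E u v && E v u}).
Hypotheses (hb1 : haven A1 k1 b1) (hb2 : haven A2 k2 b2).

Definition series_haven (Z : {set V}) : {set V} :=
  if A2 \subset Z then b1 Z else if A1 \subset Z then b2 Z else (A1 :|: A2) :\: Z.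

Let k := minn (k1 + #|A2|) (k2 + #|A1|).

Let card_setIU (Z : {set V}) : #|Z :&: (A1 :|: A2)| = #|Z :&: A1| + #|Z :&: A2|.
Proof. by rewrite setIUr cardsU setIACA (disjoint_setI0 dis) setI0 cards0 subn0. Qed.

Let small1 (Z : {set V}) : A2 \subset Z -> #|Z :&: (A1 :|: A2)| < k -> #|Z :&: A1| < k1.
Proof. by rewrite card_setIU => /setIidPr->; rewrite /k; lia. Qed.

Let small2 (Z : {set V}) : A1 \subset Z -> #|Z :&: (A1 :|: A2)| < k -> #|Z :&: A2| < k2.
Proof. by rewrite card_setIU => /setIidPr->; rewrite /k; lia. Qed.

Let not_both (Z : {set V}) :
  #|Z :&: (A1 :|: A2)| < k -> A1 \subset Z -> ~~ (A2 \subset Z).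
Proof.
have := haven_order_le hb1; have := haven_order_le hb2.
by move=> ? ? + A1Z; apply: contraTN => A2Z; rewrite card_setIU !(setIidPr _) // /k; lia.
Qed.

Let series_haven_sub (Z : {set V}) :
  #|Z :&: (A1 :|: A2)| < k -> series_haven Z \subset (A1 :|: A2) :\: Z.
Proof.
rewrite /series_haven => lt_Z; case: ifP => [A2Z | _].
  have [_ sub _ _] := hb1 (small1 A2Z lt_Z).
  exact: subset_trans sub (setSD _ (subsetUl _ _)).
case: ifP => [A1Z | _] //; have [_ sub _ _] := hb2 (small2 A1Z lt_Z).
exact: subset_trans sub (setSD _ (subsetUr _ _)).
Qed.

Let series_haven_mono (Z Z' : {set V}) :
  #|Z :&: (A1 :|: A2)| < k -> Z \subset Z' -> #|Z' :&: (A1 :|: A2)| < k ->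
  series_haven Z' \subset series_haven Z.
Proof.
move=> lt_Z sZZ' lt_Z'; rewrite /series_haven.
have [A2Z | nA2Z] := boolP (A2 \subset Z).
  have A2Z' := subset_trans A2Z sZZ'; rewrite A2Z'.
  by have [_ _ _ mono] := hb1 (small1 A2Z lt_Z); apply: mono (small1 A2Z' lt_Z').
have [A1Z | nA1Z] := boolP (A1 \subset Z); last first.
  exact: subset_trans (series_haven_sub lt_Z') (setDS _ sZZ').
have A1Z' := subset_trans A1Z sZZ'; rewrite A1Z' (negbTE (not_both lt_Z' A1Z')).
by have [_ _ _ mono] := hb2 (small2 A1Z lt_Z); apply: mono (small2 A1Z' lt_Z').
Qed.

Lemma haven_series :
  haven (A1 :|: A2) (minn (k1 + #|A2|) (k2 + #|A1|)) series_haven.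
Proof.
move=> Z lt_Z; split; [| exact: series_haven_sub | |].
- rewrite /series_haven; case: ifP => [A2Z | /negbT/subsetPn[a2 a2A a2Z]].
    by case: (hb1 (small1 A2Z lt_Z)).
  case: ifP => [A1Z | _]; first by case: (hb2 (small2 A1Z lt_Z)).
  by apply/set0Pn; exists a2; rewrite !inE a2Z a2A orbT.
- rewrite /series_haven; case: ifP => [A2Z | /negbT/subsetPn[a2 a2A a2Z]].
    by case: (hb1 (small1 A2Z lt_Z)).
  case: ifP => [A1Z | /negbT/subsetPn[a1 a1A a1Z]].
    by case: (hb2 (small2 A1Z lt_Z)).
  by apply: (series_walk_avoiding (a1 := a1) (a2 := a2) arc); rewrite inE ?a1Z ?a2Z.
- by move=> Z'; apply: series_haven_mono lt_Z.
Qed.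

End SeriesHaven.

End Havens.

Lemma card_leafset_uniq (V : finType) (t : cotree V) :
  uniq (leaves t) -> #|leafset t| = nleaves t.
Proof. by rewrite cardsE => /card_uniqP. Qed.

Lemma haven_cotree (V : finType) (E : rel V) (t : cotree V) :
  uniq (leaves t) -> yields E t -> exists b, haven E (leafset t) (cowidth t).+1 b.
Proof.
elim: t => [v|l IHl r IHr|l IHl r IHr] /= u_t.
- move=> _; exists (fun _ => [set v]).
  have -> : leafset (CLeaf v) = [set v] by apply/setP => x; rewrite !inE.
  exact: haven1.
- move: (u_t); rewrite cat_uniq => /and3P[u_l _ u_r] /and3P[y_l y_r _].
  have [b1 hb1] := IHl u_l y_l; have [b2 hb2] := IHr u_r y_r.
  rewrite /leafset leafset_cat; case: (leqP (cowidth l) (cowidth r)) => le_lr.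
    by exists b2; apply: haven_sub hb2; rewrite ?subsetUr // ltnS geq_max le_lr.
  by exists b1; apply: haven_sub hb1; rewrite ?subsetUl // ltnS geq_max leqnn ltnW.
- move: (u_t); rewrite cat_uniq => /and3P[u_l _ u_r] /and3P[y_l y_r arc].
  have [b1 hb1] := IHl u_l y_l; have [b2 hb2] := IHr u_r y_r.
  exists (series_haven (leafset l) (leafset r) b1 b2); rewrite /leafset leafset_cat.
  apply: haven_sub (haven_series (disjoint_leafset u_t) _ hb1 hb2) => //.
    by rewrite !card_leafset_uniq //; lia.
  move=> x y; rewrite !inE => xl yr.
  by move/allP: arc => /(_ x xl) /allP /(_ y yr).
Qed.

Lemma card_setI_ltn (V : finType) (Z B A : {set V}) k :
  Z \subset B -> #|B| < k -> #|Z :&: A| < k.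
Proof.
move=> sZB; apply: leq_ltn_trans.
exact: leq_trans (subset_leq_card (subsetIl _ _)) (subset_leq_card sZB).
Qed.

Section HavenLowerBounds.
Variables (V : finType) (E : rel V) (A : {set V}) (k : nat) (b : {set V} -> {set V}).
Hypothesis hb : haven E A k b.

Lemma haven_normal (Z : {set V}) (S : V -> Prop) x :
  #|Z :&: A| < k -> Z_normal E Z S -> x \in b Z -> S x ->
  forall y, y \in b Z -> S y.
Proof.
move=> lt_Z normal xb Sx y yb; have [_ sub walk _] := hb lt_Z.
have [p [xp px pZ]] := walk x y xb yb; have [q [yq qx qZ]] := walk y x yb xb.
have yZ : y \notin Z by have := subsetP sub y yb; rewrite inE => /andP[].
have pq : path E x (p ++ q) by rewrite cat_path xp px yq.
have pqZ : all (fun z => z \notin Z) (x :: p ++ q).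
  by rewrite -cat_cons all_cat pZ; case/andP: qZ.
have y_pq : y \in x :: p ++ q by rewrite -cat_cons mem_cat -px mem_last.
case: (normal x _ pq pqZ Sx _ y y_pq) => //; first by rewrite last_cat px qx.
by move=> yZ'; rewrite yZ' in yZ.
Qed.

Definition beyond (s : seq {set V}) (i : nat) (v : V) : Prop :=
  forall j, j < i -> v \notin nth set0 s j.

Variable s : seq {set V}.
Hypotheses (s_dec : is_dpath_dec E s) (s_small : forall i, #|nth set0 s i| < k).

Let small i (Z : {set V}) (sZ : Z \subset nth set0 s i) : #|Z :&: A| < k :=
  card_setI_ltn A sZ (s_small i).

Lemma beyond_arc i a c : beyond s i.+1 a -> E a c ->
  c \notin nth set0 s i :&: nth set0 s i.+1 -> beyond s i.+1 c.
Proof.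
case: s_dec => _ arc conv a_i ac cZ j lt_j; apply/negP => cj.
have [i' [j' [le_ij' lt_j' ai' cj']]] := arc a c ac.
have lt_ii' : i < i' by rewrite ltnNge; apply/negP => le_i'; case/negP: (a_i i' le_i').
move/negP: cZ; apply; rewrite inE.
have lt_ij' := leq_trans lt_ii' le_ij'.
by rewrite (conv c j i j' lt_j (ltnW lt_ij')) ?(conv c j i.+1 j' (ltnW lt_j) lt_ij').
Qed.

Lemma haven_bag_beyond i x : x \in b (nth set0 s i) -> beyond s i x.
Proof.
elim: i x => [|i IHi] x xb //.
have [/set0Pn[w wb] w_sub _ _] := hb (small (subxx (nth set0 s i))).
have wZ : #|(nth set0 s i :&: nth set0 s i.+1) :&: A| < k := small (subsetIl _ _).
have [_ _ walk mono] := hb wZ.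
have w_beyond : beyond s i.+1 w.
  move=> j; rewrite ltnS leq_eqVlt => /predU1P[-> | lt_j]; last exact: IHi.
  by have := subsetP w_sub w wb; rewrite inE => /andP[].
have [p [wp <- pZ]] := walk w x (subsetP (mono _ (subsetIl _ _) (small (subxx _))) w wb)
  (subsetP (mono _ (subsetIr _ _) (small (subxx _))) x xb).
apply: (path_avoiding_closed _ wp pZ w_beyond (mem_last w p)).
by move=> a c ac a_i; apply: beyond_arc ac.
Qed.

Lemma haven_no_small_dpath_dec : False.
Proof.
have [/set0Pn[x xb] _ _ _] := hb (small (subxx (nth set0 s (size s)))).
case: s_dec => cov _ _; have [i lt_i xi] := cov x.
by case/negP: (haven_bag_beyond xb lt_i).
Qed.

End HavenLowerBounds.

Lemma dpd_width_ge_haven (V : finType) (E : rel V) A k b (s : seq {set V}) :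
  haven E A k.+1 b -> is_dpath_dec E s -> k <= dpd_width s.
Proof.
move=> hb s_dec; rewrite leqNgt; apply/negP => lt_w.
apply: (haven_no_small_dpath_dec hb s_dec) => i; rewrite ltnS.
case: (ltnP i (size s)) => [lt_i | ge_i]; last by rewrite nth_default ?cards0.
have : #|nth set0 s i| <= \max_(X <- s) #|X|.
  by apply: (leq_bigmax_seq (F := fun X : {set V} => #|X|)); rewrite ?mem_nth.
by move: lt_w; rewrite /dpd_width; lia.
Qed.

Lemma tle_child (R : Type) (par : R -> option R) r r' :
  tle par r r' -> r' = r \/ exists2 c, par c = Some r & tle par c r'.
Proof.
case=> [[|n]]; first by case=> ->; left.
rewrite /iter_par iterS -/(iter_par par n r').
by case e: (iter_par par n r') => [c|] //= pc; right; exists c => //; exists n.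
Qed.

Section OutTree.
Variables (R : finType) (par : R -> option R) (root : R).
Hypothesis tree : out_tree par root.

Lemma iter_par_root_le v n m : n <= m ->
  iter_par par n v = Some root -> iter_par par m v = Some root -> n = m.
Proof.
have iter_None q : iter q (fun o => obind par o) None = None by elim: q => //= q ->.
move=> le_nm; rewrite -(subnK le_nm) /iter_par iterD => ->.
by case: (m - n) => [|q] //; rewrite iterSr /= tree.1 iter_None.
Qed.

Lemma out_tree_depth : exists d : R -> nat, forall r c, par c = Some r -> d c = (d r).+1.
Proof.
have reach v : exists n, iter_par par n v == Some root.
  by have [n hn] := tree.2 v; exists n; apply/eqP.
exists (fun v => ex_minn (reach v)) => r c pc.
case: ex_minnP => n /eqP hn _; case: ex_minnP => m /eqP hm _.
have hm' : iter_par par m.+1 c = Some root by rewrite /iter_par iterSr /= pc.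
case: (leqP n m.+1) => [le_n | lt_n]; first exact: iter_par_root_le le_n hn hm'.
by have := iter_par_root_le (ltnW lt_n) hm' hn => ->.
Qed.

Lemma out_tree_no_descent (P : R -> Prop) :
  (forall r, P r -> exists2 c, par c = Some r & P c) -> forall r, ~ P r.
Proof.
move=> step; have [d d_child] := out_tree_depth; set N := \max_v d v.
suff no_P m r : N - d r <= m -> ~ P r by move=> r; apply: (no_P (N - d r)).
elim: m r => [|m IHm] r le_m Pr; have [c pc Pc] := step r Pr;
  have := d_child r c pc; have : d c <= N := leq_bigmax c.
  by lia.
by move=> le_c dc; apply: (IHm c) Pc; lia.
Qed.

End OutTree.

Section DtreeLowerBound.
Variables (V R : finType) (E : rel V) (par : R -> option R) (root : R).
Variables (X W : R -> {set V}) (A : {set V}) (k : nat) (b : {set V} -> {set V}).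
Hypotheses (dtd : is_dtree_dec E par root X W) (hb : haven E A k b).
Hypothesis small_bags : forall r, #|dtd_bag par X W r| < k.

Let in_X r : {set V} := if par r is Some _ then X r else set0.

Let small r (Z : {set V}) (sZ : Z \subset dtd_bag par X W r) : #|Z :&: A| < k :=
  card_setI_ltn A sZ (small_bags r).

Let haven_below r := forall x, x \in b (in_X r) -> below par W r x.

Let haven_below_root : haven_below root.
Proof.
case: dtd => tree _ _ cov _ x _; have [r xr] := cov x.
by exists r => //; apply: tree.2.
Qed.

Let haven_below_child r : haven_below r -> exists2 c, par c = Some r & haven_below c.
Proof.
case: dtd => _ _ _ _ normal below_r; set B := dtd_bag par X W r.
have B_small := small (subxx B).
have [/set0Pn[x xB] B_sub _ _] := hb B_small.
have xB' : x \notin B by have := subsetP B_sub x xB; rewrite inE => /andP[].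
have inX_B : in_X r \subset B.
  exact: subset_trans (subsetUr _ _) (subsetUl _ _).
have [r' le_rr' xr'] : below par W r x.
  by have [_ _ _ mono] := hb (small inX_B); apply/below_r/(subsetP (mono B inX_B B_small)).
case: (tle_child le_rr') => [er' | [c pc le_cr']].
  by case/negP: xB'; rewrite /B /dtd_bag -er' !inE xr'.
have XcB : X c \subset B.
  by apply: subset_trans (bigcup_sup c _) (subsetUr _ _); rewrite pc.
have [_ _ _ Xc_mono] := hb (small XcB).
exists c; rewrite // /haven_below /in_X pc.
have xXc := subsetP (Xc_mono B XcB B_small) x xB.
apply: (haven_normal hb (small XcB) (normal r c pc) xXc).
by exists r'.
Qed.

Lemma haven_no_small_dtree_dec : False.
Proof.
case: dtd => tree _ _ _ _.
exact: (out_tree_no_descent tree haven_below_child haven_below_root).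
Qed.

End DtreeLowerBound.

Lemma dtd_width_ge_haven (V R : finType) (E : rel V) (par : R -> option R) (root : R)
    (X W : R -> {set V}) A k b :
  haven E A k.+1 b -> is_dtree_dec E par root X W -> k <= dtd_width par X W.
Proof.
move=> hb dtd; rewrite leqNgt; apply/negP => lt_w.
apply: (haven_no_small_dtree_dec dtd hb) => r; rewrite ltnS.
have : #|dtd_bag par X W r| <= \max_r #|dtd_bag par X W r| by apply: leq_bigmax.
by move: lt_w; rewrite /dtd_width; lia.
Qed.

Definition lvar (i : 'I_2) : aexp (2 + 2) := AVar (lshift 2 i).
Definition rvar (i : 'I_2) : aexp (2 + 2) := AVar (rshift 2 i).

Definition width_prog : tprog :=
  {| pk := 2;
     pleaf i := if i == ord0 then 1 else 0;
     punion i := if i == ord0 then AAdd (lvar ord0) (rvar ord0)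
                 else AMax (lvar ord_max) (rvar ord_max);
     pseries i := if i == ord0 then AAdd (lvar ord0) (rvar ord0)
                  else AMin (AAdd (lvar ord_max) (rvar ord0))
                            (AAdd (rvar ord_max) (lvar ord0));
     pout_pw := AVar ord_max;
     pout_tw := AVar ord_max |}.

Lemma pair_env_lshift k (f g : 'I_k -> nat) i : pair_env f g (lshift k i) = f i.
Proof. by rewrite /pair_env -[lshift k i]/(unsplit (inl i)) unsplitK. Qed.

Lemma pair_env_rshift k (f g : 'I_k -> nat) i : pair_env f g (rshift k i) = g i.
Proof. by rewrite /pair_env -[rshift k i]/(unsplit (inr i)) unsplitK. Qed.

Lemma run_width_prog (V : Type) (t : cotree V) :
  run_state width_prog t ord0 = nleaves t /\
  run_state width_prog t ord_max = cowidth t.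
Proof.
elim: t => [v|l [IHl0 IHl1] r [IHr0 IHr1]|l [IHl0 IHl1] r [IHr0 IHr1]] //=;
  by rewrite !(pair_env_lshift, pair_env_rshift) IHl0 IHl1 IHr0 IHr1
             /nleaves /= size_cat.
Qed.

(* A leaf costs 2 and an inner node at most 10; a binary tree with n leaves
   has n - 1 inner nodes. *)
Lemma state_cost_width_prog (V : Type) (t : cotree V) :
  state_cost width_prog t + 10 <= 12 * nleaves t.
Proof.
elim: t => [v|l IHl r IHr|l IHl r IHr] //=;
  rewrite /nleaves /= size_cat !big_ord_recr big_ord0 /= -/(nleaves l) -/(nleaves r);
  lia.
Qed.

Theorem theorem5p7 :
  exists (P : tprog) (c : nat),
    forall (V : finType) (E : rel V) (t : cotree V),
      is_bin_exdicotree E t ->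
      [/\ is_dpw E (run_pw P t),
          is_dtw E (run_tw P t) &
          run_cost P t <= c * #|V|].
Proof.
exists width_prog, 12 => V E t [t_uniq t_all t_yields].
have leafsetT : leafset t = [set: V] by apply/setP => x; rewrite !inE t_all.
have [b hb] := haven_cotree t_uniq t_yields; rewrite leafsetT in hb.
have s_dec : is_dpath_dec E (cotree_dpd t).
  by apply: is_dpath_dec_onT; rewrite -leafsetT; apply: cotree_dpd_dec.
have s_width : dpd_width (cotree_dpd t) <= cowidth t.
  rewrite /dpd_width leq_subLR add1n; apply/bigmax_leqP_seq => X X_s _.
  exact: (allP (cotree_dpd_bags t)).
have [par [root [X [W [t_dec t_width]]]]] := dtree_dec_of_dpath_dec (first_leaf t) s_dec.
have [_ run_cowidth] := run_width_prog t.
rewrite /run_pw /run_tw /= run_cowidth; split.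
- split=> [|s]; last exact: dpd_width_ge_haven hb.
  exists (cotree_dpd t); split=> //; apply/eqP.
  by rewrite eqn_leq s_width (dpd_width_ge_haven hb s_dec).
- split=> [|R par' root' X' W']; last exact: dtd_width_ge_haven hb.
  exists V, par, root, X, W; split=> //; apply/eqP.
  by rewrite eqn_leq (leq_trans t_width s_width) (dtd_width_ge_haven hb t_dec).
- have : nleaves t <= #|V| by rewrite /nleaves -(card_uniqP t_uniq) max_card.
  by rewrite /run_cost /=; have := state_cost_width_prog t; lia.
Qed.
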